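(* Let $X$ be a normed space and $Y$ a Banach space, and let $l\in\{-1,1\}$. Suppose that an odd mapping $f:X\to Y$ satisfies $\|D_f(x,y)\|\le\phi(x,y)$ for all $x,y\in X$, where $\phi:X\times X\to[0,\infty)$ is a function such that $$\sum_{i=1}^{\infty}2^{il}\phi\left(\frac{x}{2^{il}},\frac{x}{2^{il}}\right)<\infty$$ for all $x\in X$ and $\lim_{n\to\infty}2^{ln}\phi\left(\frac{x}{2^{ln}},\frac{y}{2^{ln}}\right)=0$ for all $x,y\in X$. Then the limit $$A(x)=\lim_{n\to\infty}2^{ln}\left[f\left(\frac{x}{2^{l(n-l)}}\right)-8f\left(\frac{x}{2^{ln}}\right)\right]$$ exists for all $x\in X$, and $A:X\to Y$ is the unique additive function which satisfies $$3A(x+3y)-A(3x+y)=12[A(x+y)+A(x-y)]-16[A(x)+A(y)]+12A(2y)-4A(2x)\quad(x,y\in X)$$ and $$\|f(2x)-8f(x)-A(x)\|\le\frac12\sum_{i=\frac{|l-1|}{2}}^{\infty}2^{il}\phi\left(\frac{x}{2^{l(i+l)}},\frac{x}{2^{l(i+l)}}\right)$$ for all $x\in X$ (the summation starts at $i=0$ if $l=1$ and at $i=1$ if $l=-1$).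
   Context: For a mapping $f:X\to Y$ define $$D_f(x,y)=3f(x+3y)-f(3x+y)-12[f(x+y)+f(x-y)]+16[f(x)+f(y)]-12f(2y)+4f(2x)$$ for $x,y\in X$. A function $g:X\to Y$ is additive if $g(x+y)=g(x)+g(y)$ for all $x,y\in X$. *)

From HB Require Import structures.
From mathcomp Require Import all_boot all_order all_algebra.
From mathcomp Require Import all_classical all_reals all_analysis.
Set Implicit Arguments. Unset Strict Implicit. Unset Printing Implicit Defensive.
Import Order.TTheory GRing.Theory Num.Theory.
Import numFieldNormedType.Exports.
Local Open Scope ring_scope.

Definition Df (X Y : zmodType) (f : X -> Y) (x y : X) : Y :=
  f (x + y *+ 3) *+ 3 - f (x *+ 3 + y)
  - (f (x + y) + f (x - y)) *+ 12 + (f x + f y) *+ 16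
  - f (y *+ 2) *+ 12 + f (x *+ 2) *+ 4.

Definition additive_map (X Y : zmodType) (g : X -> Y) : Prop :=
  forall x y, g (x + y) = g x + g y.

Definition odd_map (X Y : zmodType) (f : X -> Y) : Prop :=
  forall x, f (- x) = - f x.

From HB Require Import structures.
From mathcomp Require Import all_boot all_order all_algebra.
From mathcomp Require Import all_classical all_reals all_analysis.
From mathcomp Require Import ring.
Set Implicit Arguments.
Unset Strict Implicit.
Unset Printing Implicit Defensive.
Import Order.TTheory GRing.Theory Num.Theory.
Import numFieldNormedType.Exports.
Local Open Scope classical_set_scope.
Local Open Scope ring_scope.

(* Put g x := f (2x) - 8 f x. As f is odd, D_f(x,x) = 2 (g (2x) - 2 g x), so the
   sequence 2^k g (x / 2^k), indexed by k in Z, has increments bounded by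
   2^k phi(x / 2^(k+1), x / 2^(k+1)) / 2. Along k = l n these bounds are summable,
   hence the sequence converges to some A x, and telescoping gives the estimate
   for g - A. The decay of 2^(ln) phi(x/2^(ln), y/2^(ln)) forces D_A = 0 and
   A (2x) = 2 A x, and an odd solution of D_A = 0 with A (2x) = 2 A x is additive.
   Uniqueness: for additive B within the same bound of g, the difference between
   the k-th term and B x is 2^k (g - B)(x / 2^k), which is bounded by a tail of
   the convergent series. *)

Section IntCombination.
Variable V : zmodType.

Definition int_comb (vs : seq V) (p : {poly int}) : V :=
  \sum_(i < size vs) vs`_i *~ p`_i.

Lemma int_combD vs p q : int_comb vs (p + q) = int_comb vs p + int_comb vs q.
Proof. by rewrite /int_comb -big_split; apply: eq_bigr => i _; rewrite coefD mulrzDr. Qed.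

Lemma int_combN vs p : int_comb vs (- p) = - int_comb vs p.
Proof. by rewrite /int_comb -sumrN; apply: eq_bigr => i _; rewrite coefN mulrNz. Qed.

Lemma int_comb0 vs : int_comb vs 0 = 0.
Proof. by rewrite /int_comb big1 // => i _; rewrite coef0 mulr0z. Qed.

Lemma int_combMn vs p n : int_comb vs (p *+ n) = int_comb vs p *+ n.
Proof. by elim: n => [|n IH]; rewrite ?int_comb0 // !mulrS int_combD IH. Qed.

Lemma int_combXn vs i : (i < size vs)%N -> int_comb vs 'X^i = vs`_i.
Proof.
move=> lti; rewrite /int_comb (bigD1 (Ordinal lti)) //= coefXn eqxx mulr1z.
rewrite big1 ?addr0 // => j /negbTE neq_ji.
by rewrite coefXn (_ : (j == i :> nat) = false) ?mulr0z.
Qed.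
End IntCombination.
Arguments int_comb {V}.

(* [zmod] proves an equation between Z-linear combinations of arbitrary terms of
   a zmodType: it sends the i-th distinct term to 'X^i, checks the resulting
   identity in {poly int} with [ring], and maps it back through [int_comb]. *)
Ltac inlist x l :=
  match l with
  | nil => false
  | cons ?y _ => let __ := match goal with _ => unify x y end in true
  | cons _ ?r => inlist x r
  end.

Ltac collect t acc :=
  lazymatch t with
  | ?a + ?b => let acc1 := collect a acc in collect b acc1
  | - ?a => collect a acc
  | ?a *+ ?n => collect a acc
  | 0 => acc
  | _ => let b := inlist t acc in
         lazymatch b with true => acc | false => constr:(cons t acc) end
  end.

Ltac findi x l :=
  match l with
  | cons ?y _ => let __ := match goal with _ => unify x y end in constr:(0%N)
  | cons _ ?r => let k := findi x r in constr:(S k)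
  end.

Ltac reif l t :=
  lazymatch t with
  | ?a + ?b => let a' := reif l a in let b' := reif l b in constr:(a' + b')
  | - ?a => let a' := reif l a in constr:(- a')
  | ?a *+ ?n => let a' := reif l a in constr:(a' *+ n)
  | 0 => constr:(0 : {poly int})
  | _ => let k := findi t l in constr:(('X^k : {poly int}))
  end.

Ltac zmod :=
  lazymatch goal with
  | |- @eq ?T ?lhs ?rhs =>
    let l0 := collect lhs (@nil T) in
    let l := collect rhs l0 in
    let pl := reif l lhs in
    let pr := reif l rhs in
    let E := fresh "E" in
    have E : pl = pr by [ring];
    have {}E := congr1 (int_comb l) E;
    rewrite ?(int_combD, int_combN, int_combMn, int_comb0) ?int_combXn // in E; exact: E
  end.

Lemma mulrSnI (R : numFieldType) (Y : lmodType R) (z w : Y) n :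
  z *+ n.+1 = w *+ n.+1 -> z = w.
Proof.
move=> e; apply: (@scalerI _ _ n.+1%:R); first by rewrite pnatr_eq0.
by rewrite !scaler_nat.
Qed.

Lemma odd_map0 (R : numFieldType) (X : zmodType) (Y : lmodType R) (f : X -> Y) :
  odd_map f -> f 0 = 0.
Proof.
move=> f_odd; apply: (@mulrSnI R _ _ _ 1); apply: subr0_eq.
by rewrite mul0rn subr0 mulr2n {1}(_ : f 0 = - f 0) ?addNr // -f_odd oppr0.
Qed.

Lemma Df_eq0_of_additive (X Y : zmodType) (B : X -> Y) :
  additive_map B -> forall x y, Df B x y = 0.
Proof.
move=> Badd x y.
have B0 : B 0 = 0 by apply: (addrI (B 0)); rewrite -Badd !addr0.
have BN v : B (- v) = - B v by apply: (addrI (B v)); rewrite -Badd !subrr.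
have BMn v n : B (v *+ n) = B v *+ n.
  by elim: n => [|n IH]; rewrite ?mulr0n // !mulrS Badd IH.
rewrite /Df !(Badd, BN, BMn); zmod.
Qed.

Lemma Df_eq0E (R : nzRingType) (X : lmodType R) (Y : zmodType) (A : X -> Y) x y :
  Df A x y = 0 ->
  A (x + 3 *: y) *+ 3 - A (3 *: x + y)
  = (A (x + y) + A (x - y)) *+ 12 - (A x + A y) *+ 16
    + A (2 *: y) *+ 12 - A (2 *: x) *+ 4.
Proof. by move=> DA; apply: subr0_eq; rewrite -DA /Df !scaler_nat; zmod. Qed.

Lemma DfZ (R : nzRingType) (X : zmodType) (Y : lmodType R) (r : R) (h : X -> Y) x y :
  Df (fun z => r *: h z) x y = r *: Df h x y.
Proof. by rewrite /Df !(scalerDr, scalerBr, scalerMnr, scalerN); zmod. Qed.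

Lemma Df_compZ (R : nzRingType) (X : lmodType R) (Y : zmodType) (r : R) (h : X -> Y) x y :
  Df (fun z => h (r *: z)) x y = Df h (r *: x) (r *: y).
Proof. by rewrite /Df !(scalerDr, scalerBr, scalerMnr, scalerN); zmod. Qed.

Definition cubic_defect (R : nzRingType) (X : lmodType R) (Y : zmodType) (f : X -> Y) x :=
  f (2 *: x) - f x *+ 8.

Lemma cubic_defect_odd (R : nzRingType) (X : lmodType R) (Y : zmodType) (f : X -> Y) :
  odd_map f -> odd_map (cubic_defect f).
Proof. by move=> f_odd x; rewrite /cubic_defect scalerN !f_odd; zmod. Qed.

Lemma Df_cubic_defect (R : nzRingType) (X : lmodType R) (Y : zmodType) (f : X -> Y) x y :
  Df (cubic_defect f) x y = Df f (2 *: x) (2 *: y) - Df f x y *+ 8.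
Proof. by rewrite -Df_compZ /Df /cubic_defect; zmod. Qed.

Section AdditiveOfDf.
Variables (R : numFieldType) (X : zmodType) (Y : lmodType R) (A : X -> Y).
Hypothesis oddA : odd_map A.
Hypothesis A2 : forall x, A (x *+ 2) = A x *+ 2.
Hypothesis DA : forall x y, Df A x y = 0.

Lemma Df_eq0_triple x y :
  A (x + y *+ 3) *+ 8 = A (x + y) *+ 48 + A (x - y) *+ 24 - A x *+ 64.
Proof.
apply: subr0_eq; transitivity (Df A x y *+ 3 + Df A y x).
  rewrite /Df !A2 (addrC y (x *+ 3)) (addrC (y *+ 3) x) (addrC y x) -(opprB x y) oddA.
  zmod.
by rewrite !DA mul0rn addr0.
Qed.

Lemma Df_eq0_double_add u v :
  A (u *+ 2 + v) = A u *+ 6 - A v *+ 3 - A (u - v) *+ 4.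
Proof.
have := Df_eq0_triple (u - v) (u + v).
have -> : u - v + (u + v) *+ 3 = (u *+ 2 + v) *+ 2 by zmod.
have -> : u - v + (u + v) = u *+ 2 by zmod.
have -> : u - v - (u + v) = - (v *+ 2) by zmod.
rewrite oddA !A2 => e; apply: (@mulrSnI _ _ _ _ 15); apply: subr0_eq.
transitivity (A (u *+ 2 + v) *+ 2 *+ 8
  - (A u *+ 2 *+ 48 + - (A v *+ 2) *+ 24 - A (u - v) *+ 64)); first zmod.
by rewrite e subrr.
Qed.

Lemma additive_of_Df_eq0 : additive_map A.
Proof.
move=> x y.
move: (Df_eq0_double_add x (y *+ 2)) (Df_eq0_double_add (- y) x).
have -> : x - y *+ 2 = (- y) *+ 2 + x by zmod.
have -> : - y - x = - (x + y) by zmod.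
rewrite -mulrnDl !A2 !oddA => e1 e2.
apply: (@mulrSnI _ _ _ _ 17); apply: subr0_eq.
transitivity ((A (x + y) *+ 2 - (A x *+ 6 - A y *+ 2 *+ 3 - A ((- y) *+ 2 + x) *+ 4))
   - (A ((- y) *+ 2 + x) - (- A y *+ 6 - A x *+ 3 - - A (x + y) *+ 4)) *+ 4); first zmod.
by rewrite -e1 -e2 !subrr mul0rn subr0.
Qed.
End AdditiveOfDf.

Lemma additive_exp2zZ (R : numFieldType) (X Y : lmodType R) (B : X -> Y) :
  additive_map B -> forall (k : int) z, B ((2 : R) ^ k *: z) = 2 ^ k *: B z.
Proof.
move=> Badd.
have BnatZ (n : nat) z : B ((2 : R) ^+ n *: z) = 2 ^+ n *: B z.
  elim: n z => [|n IH] z; first by rewrite !expr0 !scale1r.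
  by rewrite exprS -!scalerA !scaler_nat !mulr2n Badd IH.
case=> n z; first by rewrite -exprnP BnatZ.
rewrite NegzE -invr_expz -exprnP.
have n2_neq0 : (2 : R) ^+ n.+1 != 0 by rewrite expf_neq0 // pnatr_eq0.
by rewrite -{2}[z](scalerKV n2_neq0) BnatZ scalerA mulVf ?scale1r.
Qed.

Lemma exp2zS (R : numFieldType) (k : int) : (2 : R) ^ (k + 1) = 2 ^ k * 2.
Proof. by rewrite exprzDr ?expr1z // unitfE pnatr_eq0. Qed.

Lemma cvg0_norm_le (R : realType) (Y : normedModType R) (v : nat -> Y) (w : nat -> R) :
  (forall n, `|v n| <= w n) -> w @ \oo --> 0 -> v @ \oo --> 0.
Proof.
move=> vw w0; apply: norm_cvg0; apply: (squeeze_cvgr _ (cvg_cst 0) w0).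
by apply: nearW => n; rewrite normr_ge0 vw.
Qed.

Lemma Df_cvg (R : realType) (X : zmodType) (Y : normedModType R)
    (h : nat -> X -> Y) (H : X -> Y) x y :
  (forall z, (fun n => h n z) @ \oo --> H z) ->
  (fun n => Df (h n) x y) @ \oo --> Df H x y.
Proof.
move=> hH; rewrite /Df.
by repeat first [apply: cvgD | apply: cvgN | apply: cvgMn | apply: hH].
Qed.

Lemma nneseries_shift (R : realType) (d : nat -> R) m n : (forall i, 0 <= d i) ->
  (\sum_(m <= i <oo) (d (i + n)%N)%:E = \sum_(m + n <= i <oo) (d i)%:E)%E.
Proof.
move=> d_ge0; have d0 k : (0 <= (d k)%:E)%E by rewrite lee_fin.
rewrite -(@nneseries_addn _ (fun i => (d (i + n)%N)%:E) m) //.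
rewrite -(@nneseries_addn _ (fun i => (d i)%:E) (m + n)) //.
by apply: eq_eseriesr => i _; rewrite addnA.
Qed.

Section SummableSeries.
Variables (R : realType) (d : nat -> R) (m : nat).
Hypothesis d_ge0 : forall i, 0 <= d i.
Hypothesis d_fin : (\sum_(m <= i <oo) (d i)%:E < +oo)%E.

Lemma nneseries_fin_num : (\sum_(m <= i <oo) (d i)%:E)%E \is a fin_num.
Proof. by rewrite ge0_fin_numE // nneseries_ge0 // => i _ _; rewrite lee_fin. Qed.

Lemma partial_sum_le_fine_nneseries n :
  \sum_(m <= i < n) d i <= fine (\sum_(m <= i <oo) (d i)%:E).
Proof.
rewrite -lee_fin fineK ?nneseries_fin_num // -sumEFin.
by apply: nneseries_lim_ge => i _ _; rewrite lee_fin.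
Qed.

Lemma nneseries_tail_fin_num n : (\sum_(m + n <= i <oo) (d i)%:E)%E \is a fin_num.
Proof.
have d0 k : (0 <= (d k)%:E)%E by rewrite lee_fin.
rewrite ge0_fin_numE ?nneseries_ge0 //; apply: le_lt_trans d_fin.
by rewrite (nneseries_split m n) // leeDr // sumEFin lee_fin sumr_ge0.
Qed.

Lemma fine_nneseries_tail_cvg0 :
  (fun n => fine (\sum_(m + n <= i <oo) (d i)%:E)) @ \oo --> 0.
Proof.
have d0 k : (0 <= (d k)%:E)%E by rewrite lee_fin.
have fin0 : (\sum_(0 <= i <oo) (d i)%:E < +oo)%E.
  by rewrite (nneseries_split 0 m) // add0n lte_add_pinfty // sumEFin ltry.
have := nneseries_tail_cvg fin0 (fun k _ => d0 k).
rewrite -(cvg_shiftn m) /= => tail0.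
have : (fun n => \sum_(m + n <= i <oo) (d i)%:E)%E @ \oo --> 0%:E.
  by apply: cvg_trans tail0; apply: near_eq_cvg; apply: nearW => n /=; rewrite addnC.
by case/fine_cvgP.
Qed.

Section Increments.
Variables (Y : completeNormedModType R) (u : nat -> Y).
Hypothesis u_incr : forall n, `|u n.+1 - u n| <= d (n + m).

Lemma dist_partial_le n : `|u 0%N - u n| <= \sum_(m <= i < n + m) d i.
Proof.
elim: n => [|n IH]; first by rewrite subrr normr0 big_geq.
rewrite addSn big_nat_recr ?leq_addl //= -(subrKA (u n)).
by apply: (le_trans (ler_normD _ _)); rewrite lerD // -opprB normrN.
Qed.

Lemma cvgn_summable_increments : cvgn u.
Proof.
have -> : u = (fun n => u 0%N + series (telescope u) n).
  by apply/funext => n; rewrite -eq_sum_telescope.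
apply: cvgP; apply: cvgD; first exact: cvg_cst.
apply: normed_cvg; apply: nondecreasing_is_cvgn.
  exact: (@nondecreasing_series _ _ xpredT 0%N (fun n _ _ => normr_ge0 _)).
exists (fine (\sum_(m <= i <oo) (d i)%:E)) => _ [n _ <-].
rewrite /normed_series_of /series /= big_mkord.
apply: le_trans (partial_sum_le_fine_nneseries (n + m)).
rewrite -{1}(add0n m) big_addn addnK big_mkord.
by apply: ler_sum => k _; exact: u_incr.
Qed.

Lemma dist_lim_le : (`|u 0%N - lim (u @ \oo)|%:E <= \sum_(m <= i <oo) (d i)%:E)%E.
Proof.
rewrite -(fineK nneseries_fin_num) lee_fin.
have dist_cvg : (fun n => `|u 0%N - u n|) @ \oo --> `|u 0%N - lim (u @ \oo)|.
  by apply: cvg_norm; apply: cvgB; [exact: cvg_cst | exact: cvgn_summable_increments].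
rewrite -(cvg_lim _ dist_cvg) //.
apply: limr_le; first by apply/cvg_ex; eexists; exact: dist_cvg.
apply: nearW => n; apply: le_trans (dist_partial_le n) _.
exact: partial_sum_le_fine_nneseries.
Qed.
End Increments.
End SummableSeries.

Section ScaledDefect.
Variables (R : realType) (X : normedModType R) (Y : normedModType R).
Variables (f : X -> Y) (phi : X -> X -> R).
Hypothesis f_odd : odd_map f.
Hypothesis phi_ge0 : forall x y, 0 <= phi x y.
Hypothesis Df_le : forall x y, `|Df f x y| <= phi x y.

(* The sequence of the theorem is [scaled_defect x (l * n)]; indexing by all of
   Z lets the cases l = 1 and l = -1 share the step estimate below. *)
Definition scaled_defect (x : X) (k : int) : Y :=
  (2 : R) ^ k *: cubic_defect f ((2 ^ k)^-1 *: x).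

Definition step_bound (x : X) (k : int) : R :=
  (2 : R) ^ k * phi ((2 ^ (k + 1))^-1 *: x) ((2 ^ (k + 1))^-1 *: x).

Lemma cubic_defect_double_le x :
  `|cubic_defect f (2 *: x) - cubic_defect f x *+ 2| <= 2^-1 * phi x x.
Proof.
have DfE : Df f x x = (cubic_defect f (2 *: x) - cubic_defect f x *+ 2) *+ 2.
  rewrite /Df /cubic_defect !scaler_nat subrr (odd_map0 f_odd).
  have -> : x + x *+ 3 = x *+ 2 *+ 2 by zmod.
  have -> : x *+ 3 + x = x *+ 2 *+ 2 by zmod.
  have -> : x + x = x *+ 2 by zmod.
  zmod.
rewrite -(ler_pM2l (ltr0n R 2)) mulrA divff ?pnatr_eq0 // mul1r mulr_natl -normrMn -DfE.
exact: Df_le.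
Qed.

Lemma scaled_defect_step x k :
  `|scaled_defect x (k + 1) - scaled_defect x k| <= 2^-1 * step_bound x k.
Proof.
set w := (2 ^ (k + 1))^-1 *: x.
have wE : (2 ^ k)^-1 *: x = 2 *: w.
  by rewrite /w scalerA exp2zS invfM mulrCA divff ?mulr1 // pnatr_eq0.
rewrite /scaled_defect wE -/w exp2zS -scalerA (scaler_nat 2 (cubic_defect f w)) -scalerBr.
rewrite normrZ gtr0_norm ?exprz_gt0 // distrC /step_bound -/w mulrCA ler_pM2l ?exprz_gt0 //.
exact: cubic_defect_double_le.
Qed.

Lemma scaled_defect_double_le x k :
  `|scaled_defect (2 *: x) k - scaled_defect x k *+ 2|
  <= 2^-1 * (2 ^ k * phi ((2 ^ k)^-1 *: x) ((2 ^ k)^-1 *: x)).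
Proof.
rewrite /scaled_defect scalerA mulrC -scalerA scalerMnr -scalerBr normrZ.
by rewrite gtr0_norm ?exprz_gt0 // mulrCA ler_pM2l ?exprz_gt0 // cubic_defect_double_le.
Qed.

Lemma Df_scaled_defect_le x y k :
  `|Df (scaled_defect^~ k) x y|
  <= 2 ^ k * phi ((2 ^ k)^-1 *: (2 *: x)) ((2 ^ k)^-1 *: (2 *: y))
   + (2 ^ k * phi ((2 ^ k)^-1 *: x) ((2 ^ k)^-1 *: y)) *+ 8.
Proof.
rewrite (DfZ (2 ^ k) (fun z => cubic_defect f ((2 ^ k)^-1 *: z))) Df_compZ.
rewrite normrZ gtr0_norm ?exprz_gt0 // -mulrnAr -mulrDr ler_pM2l ?exprz_gt0 //.
rewrite Df_cubic_defect !scalerA !(mulrC 2) -!scalerA.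
by apply: (le_trans (ler_normB _ _)); rewrite normrMn lerD // ler_wMn2r.
Qed.

Lemma step_bound_scale x j k :
  (2 : R) ^ j * step_bound ((2 ^ j)^-1 *: x) k = step_bound x (k + j).
Proof.
have two_unit : (2 : R) \is a GRing.unit by rewrite unitfE pnatr_eq0.
rewrite /step_bound mulrA -exprzDr // scalerA -invfM -exprzDr // (addrC j).
by rewrite (addrAC k 1 j).
Qed.

Lemma step_bound_half x k :
  step_bound x k
  = 2^-1 * (2 ^ (k + 1) * phi ((2 ^ (k + 1))^-1 *: x) ((2 ^ (k + 1))^-1 *: x)).
Proof. by rewrite /step_bound mulrA exp2zS mulrCA mulVf ?mulr1 ?pnatr_eq0. Qed.

Lemma step_bound_ge0 x k : 0 <= step_bound x k.
Proof. by rewrite mulr_ge0 ?exprz_ge0. Qed.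
End ScaledDefect.

Section Construction.
Variables (R : realType) (X : normedModType R) (Y : completeNormedModType R).
Variables (f : X -> Y) (phi : X -> X -> R) (l : int).
Hypothesis f_odd : odd_map f.
Hypothesis phi_ge0 : forall x y, 0 <= phi x y.
Hypothesis Df_le : forall x y, `|Df f x y| <= phi x y.
Hypothesis l_pm1 : l = 1 \/ l = -1.
Hypothesis phi_lim : forall x y : X,
  (fun n : nat => (2 : R) ^ (l * n%:Z) *
     phi (((2 : R) ^ (l * n%:Z))^-1 *: x) (((2 : R) ^ (l * n%:Z))^-1 *: y)) @ \oo --> 0.

Definition first_index : nat := if l == 1 then 0%N else 1%N.

Definition approx (x : X) (n : nat) : Y := scaled_defect f x (l * n%:Z).

Definition defect_estimate (B : X -> Y) : Prop := forall x,
  (`|cubic_defect f x - B x|%:E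
   <= (2^-1)%:E * \sum_(first_index <= i <oo) (step_bound phi x (i%:Z * l))%:E)%E.

Lemma approx_Df_cvg0 x y : (fun n => Df (approx^~ n) x y) @ \oo --> 0.
Proof.
apply: cvg0_norm_le => [n|]; first exact: Df_scaled_defect_le.
by rewrite -[0](addr0 0) -{2}(mul0rn R 8); apply: cvgD; [|apply: cvgMn].
Qed.

Lemma approx_double_cvg0 x :
  (fun n => approx (2 *: x) n - approx x n *+ 2) @ \oo --> 0.
Proof.
apply: cvg0_norm_le => [n|]; first exact: scaled_defect_double_le.
by rewrite -(mulr0 2^-1); apply: cvgMr.
Qed.

(* Of the indices l n and l (n + 1), the smaller one is l (n + first_index). *)
Lemma approx_step x n :
  `|approx x n.+1 - approx x n| <= 2^-1 * step_bound phi x ((n + first_index)%N%:Z * l).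
Proof.
rewrite /approx /first_index; case: l_pm1 => ->; rewrite /=.
  by rewrite addn0 !mul1r mulr1 -addn1 PoszD scaled_defect_step.
rewrite addn1 distrC mulrN1 !mulN1r.
have -> : - (n.+1)%:Z = - n%:Z - 1 by rewrite -addn1 PoszD opprD.
by rewrite -{1}(subrK 1 (- n%:Z)) scaled_defect_step.
Qed.

Lemma l_sqr : l * l = 1.
Proof. by case: l_pm1 => ->. Qed.

Lemma approxE x n :
  (2 : R) ^ (l * n%:Z) *: (f (((2 : R) ^ (l * (n%:Z - l)))^-1 *: x)
                         - f (((2 : R) ^ (l * n%:Z))^-1 *: x) *+ 8) = approx x n.
Proof.
rewrite /approx /scaled_defect /cubic_defect scalerA mulrBr l_sqr.
congr (_ *: (f (_ *: x) - _)).
by rewrite -[in RHS](subrK 1 (l * n%:Z)) exp2zS invfM mulrCA divff ?mulr1 ?pnatr_eq0.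
Qed.

Lemma step_boundE x (i : nat) :
  (2 : R) ^ (i%:Z * l) * phi (((2 : R) ^ (l * (i%:Z + l)))^-1 *: x)
                             (((2 : R) ^ (l * (i%:Z + l)))^-1 *: x)
  = step_bound phi x (i%:Z * l).
Proof. by rewrite /step_bound mulrDr l_sqr (mulrC l). Qed.

Lemma step_bound_summable :
  (forall x, (\sum_(1 <= i <oo)
     ((2 : R) ^ (i%:Z * l) * phi (((2 : R) ^ (i%:Z * l))^-1 *: x)
                                 (((2 : R) ^ (i%:Z * l))^-1 *: x))%:E < +oo)%E) ->
  forall x, (\sum_(first_index <= i <oo) (step_bound phi x (i%:Z * l))%:E < +oo)%E.
Proof.
move=> w_fin x.
pose w (k : int) := (2 : R) ^ k * phi ((2 ^ k)^-1 *: x) ((2 ^ k)^-1 *: x).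
pose F (i : nat) := 2^-1 * w (i%:Z * l).
have F_ge0 i : 0 <= F i by rewrite mulr_ge0 ?invr_ge0 ?mulr_ge0 ?exprz_ge0.
have F_fin : (\sum_(1 <= i <oo) (F i)%:E < +oo)%E.
  rewrite (eq_eseriesr (fun i _ => EFinM _ _)) nneseriesZl; last first.
    by move=> i _; rewrite lee_fin mulr_ge0 ?exprz_ge0.
  by rewrite lte_mul_pinfty ?lee_fin ?invr_ge0 //; exact: w_fin.
rewrite /first_index; case: l_pm1 => l1; rewrite l1 /= in F F_ge0 F_fin *.
- rewrite (eq_eseriesr (fun i _ => congr1 EFin (step_bound_half phi x _))).
  rewrite (eq_eseriesr (g := fun i => (F (i + 1)%N)%:E)); last first.
    by move=> i _; rewrite /F PoszD !mulr1.
  by rewrite nneseries_shift.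
- rewrite -[1%N]/(0 + 1)%N -nneseries_shift => [|i]; last exact: step_bound_ge0.
  rewrite (eq_eseriesr (fun i _ => congr1 EFin (step_bound_half phi x _))).
  rewrite (eq_eseriesr (g := fun i => (F i)%:E)); last first.
    by move=> i _; rewrite /F PoszD mulrDl mul1r addrK.
  by rewrite nneseries_recl // ?lte_add_pinfty ?ltry // => k _; rewrite lee_fin.
Qed.

Hypothesis step_bound_fin : forall x,
  (\sum_(first_index <= i <oo) (step_bound phi x (i%:Z * l))%:E < +oo)%E.

Let half_step x i := 2^-1 * step_bound phi x (i%:Z * l).

Lemma half_step_ge0 x i : 0 <= half_step x i.
Proof. by rewrite mulr_ge0 ?invr_ge0 ?(step_bound_ge0 phi_ge0). Qed.

Lemma nneseries_half_step x :
  (\sum_(first_index <= i <oo) (half_step x i)%:E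
   = (2^-1)%:E * \sum_(first_index <= i <oo) (step_bound phi x (i%:Z * l))%:E)%E.
Proof.
by rewrite -nneseriesZl // => i _; rewrite lee_fin (step_bound_ge0 phi_ge0).
Qed.

Lemma half_step_fin x : (\sum_(first_index <= i <oo) (half_step x i)%:E < +oo)%E.
Proof.
by rewrite nneseries_half_step lte_mul_pinfty // ?lee_fin ?invr_ge0 ?step_bound_fin.
Qed.

Lemma approx_cvgn x : cvgn (approx x).
Proof.
exact: (cvgn_summable_increments (half_step_ge0 x) (half_step_fin x) (approx_step x)).
Qed.

Definition additive_limit (x : X) : Y := lim (approx x @ \oo).

Lemma approx_cvg x : approx x @ \oo --> additive_limit x.
Proof. exact: approx_cvgn. Qed.

Lemma additive_limit_additive : additive_map additive_limit.
Proof.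
apply: (@additive_of_Df_eq0 R) => [x|x|x y].
- rewrite /additive_limit (_ : approx (- x) = - approx x) ?limN //; first exact: approx_cvgn.
  by apply/funext => n; rewrite /approx /scaled_defect scalerN cubic_defect_odd // scalerN.
- rewrite -[x *+ 2]scaler_nat; apply/cvg_lim => //.
  have -> : approx (2 *: x) = fun n => approx (2 *: x) n - approx x n *+ 2 + approx x n *+ 2.
    by apply/funext => n; rewrite subrK.
  rewrite -[additive_limit x *+ 2]add0r.
  apply: cvgD; [exact: approx_double_cvg0 | apply: cvgMn; exact: approx_cvg].
- have DfA_lim := @Df_cvg _ _ _ (fun n z => approx z n) _ x y approx_cvg.
  exact: (cvg_unique _ DfA_lim (approx_Df_cvg0 x y)).
Qed.

Lemma approx0 x : approx x 0 = cubic_defect f x.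
Proof. by rewrite /approx /scaled_defect mulr0 expr0z invr1 !scale1r. Qed.

Lemma defect_estimate_additive_limit : defect_estimate additive_limit.
Proof.
move=> x; rewrite -nneseries_half_step -approx0.
exact: (dist_lim_le (half_step_ge0 x) (half_step_fin x) (approx_step x)).
Qed.

Lemma half_step_scale x n i :
  (2 : R) ^ (l * n%:Z) * half_step ((2 ^ (l * n%:Z))^-1 *: x) i = half_step x (i + n).
Proof. by rewrite /half_step mulrCA step_bound_scale PoszD mulrDl (mulrC l). Qed.

Lemma approx_cvg_of_estimate (B : X -> Y) :
  additive_map B -> defect_estimate B -> forall x, approx x @ \oo --> B x.
Proof.
move=> Badd B_le x; apply/subr_cvg0.
apply: cvg0_norm_le (fine_nneseries_tail_cvg0 (half_step_ge0 x) (half_step_fin x)) => n.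
set s := (2 : R) ^ (l * n%:Z); set z := s^-1 *: x.
have s_gt0 : 0 < s by exact: exprz_gt0.
have Bx : B x = s *: B z.
  by rewrite -additive_exp2zZ // /z scalerA divff ?scale1r // gt_eqF.
rewrite /approx /scaled_defect -/s -/z Bx -scalerBr normrZ gtr0_norm //.
rewrite -lee_fin fineK; last first.
  exact: nneseries_tail_fin_num (half_step_ge0 x) (half_step_fin x) n.
(* 2^(ln) times the estimate at x / 2^(ln) is the tail of the estimate at x. *)
rewrite -nneseries_shift; last exact: half_step_ge0.
rewrite (eq_eseriesr (fun i _ => congr1 EFin (esym (half_step_scale x n i)))) -/s -/z.
rewrite (eq_eseriesr (fun i _ => EFinM s (half_step z i))) nneseriesZl; last first.
  by move=> i _; rewrite lee_fin half_step_ge0.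
rewrite EFinM nneseries_half_step; apply: lee_wpmul2l; last exact: B_le.
by rewrite lee_fin ltW.
Qed.
End Construction.

Theorem theorem3p1 (R : realType) (X : normedModType R)
  (Y : completeNormedModType R) (l : int) (f : X -> Y) (phi : X -> X -> R) :
  (l = 1 \/ l = -1) ->
  odd_map f ->
  (forall x y, 0 <= phi x y) ->
  (forall x y, `|Df f x y| <= phi x y) ->
  (forall x : X,
     (\sum_(1 <= i <oo)
        ((2:R) ^ (i%:Z * l) *
         phi (((2:R) ^ (i%:Z * l))^-1 *: x) (((2:R) ^ (i%:Z * l))^-1 *: x))%:E
      < +oo)%E) ->
  (forall x y : X,
     (fun n : nat => (2:R) ^ (l * n%:Z) *
        phi (((2:R) ^ (l * n%:Z))^-1 *: x) (((2:R) ^ (l * n%:Z))^-1 *: y))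
       @ \oo --> (0:R)) ->
  let eqA (A : X -> Y) := forall x y : X,
      A (x + 3 *: y) *+ 3 - A (3 *: x + y)
      = (A (x + y) + A (x - y)) *+ 12 - (A x + A y) *+ 16
        + A (2 *: y) *+ 12 - A (2 *: x) *+ 4 in
  let boundA (A : X -> Y) := forall x : X,
      (`|f (2 *: x) - f x *+ 8 - A x|%:E
       <= (2^-1 : R)%:E *
          \sum_((if (l == 1)%R then 0%N else 1%N) <= i <oo)
            ((2:R) ^ (i%:Z * l) *
             phi (((2:R) ^ (l * (i%:Z + l)))^-1 *: x)
                 (((2:R) ^ (l * (i%:Z + l)))^-1 *: x))%:E)%E in
  exists A : X -> Y,
    (forall x : X,
       (fun n : nat => (2:R) ^ (l * n%:Z) *:
          (f (((2:R) ^ (l * (n%:Z - l)))^-1 *: x)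
           - f (((2:R) ^ (l * n%:Z))^-1 *: x) *+ 8))
         @ \oo --> A x) /\
    additive_map A /\ eqA A /\ boundA A /\
    (forall A' : X -> Y, additive_map A' -> eqA A' -> boundA A' -> A' = A).
Proof.
move=> l_pm1 f_odd phi_ge0 Df_le phi_sum phi_lim eqA boundA.
have step_fin := step_bound_summable phi_ge0 l_pm1 phi_sum.
have boundE B : boundA B <-> defect_estimate f phi l B.
  by rewrite /boundA; under eq_forall do under eq_eseriesr do rewrite step_boundE //.
have A_cvg := approx_cvg f_odd phi_ge0 Df_le l_pm1 step_fin.
exists (additive_limit f l); split.
  by move=> x; under eq_fun do rewrite approxE //; exact: A_cvg.
have A_add := additive_limit_additive f_odd phi_ge0 Df_le l_pm1 phi_lim step_fin.
split=> //; split; first by move=> x y; apply/Df_eq0E/Df_eq0_of_additive.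
split; first by apply/boundE; exact: defect_estimate_additive_limit.
move=> B B_add _ /boundE B_le; apply/funext => x.
exact: (cvg_unique _ (approx_cvg_of_estimate phi_ge0 step_fin B_add B_le (x := x)) (A_cvg x)).
Qed.
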